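(* Fix an integer $k\ge1$ and let $\Delta_k:=\log(1/2)/\log(1-2^{-k})$. Fix $\Delta>0$, and for $n\ge k$ let $m=\lfloor\Delta n\rfloor$ and $V=(V_1,\dots,V_m)\sim\mathbf{P}_{\text{unif}}$. As $n\to\infty$: (i) if $\Delta<\Delta_k$, then $\mathbf{P}_{\text{unif}}(V\in\mathsf{FLAT})\to 1$; (ii) if $\Delta>\Delta_k$, then $\mathbf{P}_{\text{unif}}(V\in\mathsf{FLAT})\to 0$.
   Context: A $k$-flat of $\mathbb{F}_2^n$ is an affine subspace of dimension $n-k$; equivalently a set $\{x\in\mathbb{F}_2^n : \ell_i(x)=\varepsilon_i \ \forall i\in[k]\}$ where $\ell_1,\dots,\ell_k$ are linearly independent linear forms on $\mathbb{F}_2^n$ and $\varepsilon_1,\dots,\varepsilon_k\in\mathbb{F}_2$. Let $q_0$ be the uniform distribution on the set of all $k$-flats of $\mathbb{F}_2^n$, and $\mathbf{P}_{\text{unif}}:=q_0^{\otimes m}$ (i.e. $V_1,\dots,V_m$ i.i.d. uniform $k$-flats). For $V=(V_1,\dots,V_m)$, let $\mathcal{S}(V)=\mathbb{F}_2^n\setminus\bigcup_{j=1}^m V_j$ and $Z(V)=|\mathcal{S}(V)|$. $V$ is flat satisfiable, written $V\in\mathsf{FLAT}$, if $Z(V)\ge1$, i.e. $\bigcup_j V_j\neq\mathbb{F}_2^n$. *)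

From HB Require Import structures.
From mathcomp Require Import all_boot all_order all_algebra.
Set Implicit Arguments. Unset Strict Implicit. Unset Printing Implicit Defensive.
Import GRing.Theory.
Local Open Scope ring_scope.

Definition F2vec (n : nat) := 'rV['F_2]_n.

(* A k-flat of F_2^n: {x | l_i(x) = e_i for all i < k}, where the l_i are the
   rows of a k x n matrix A with linearly independent rows (row_free A). *)
Definition is_flat (n k : nat) (S : {set F2vec n}) : bool :=
  [exists A : 'M['F_2]_(k, n), exists e : 'cV['F_2]_k,
     row_free A && (S == [set x : F2vec n | A *m x^T == e])].

Definition flats (n k : nat) : {set {set F2vec n}} := [set S | is_flat k S].

Definition flat_sat (n m : nat) (V : {ffun 'I_m -> {set F2vec n}}) : bool :=
  (\bigcup_(j < m) V j) != [set: F2vec n].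

Definition num_flat_sat (n k m : nat) : nat :=
  #|[set V : {ffun 'I_m -> {set F2vec n}} |
       [forall j, V j \in flats n k] && flat_sat V]|.

Definition num_flat_tuples (n k m : nat) : nat := (#|flats n k| ^ m)%N.

From Stdlib Require Import Reals.
Local Open Scope R_scope.

(* P_unif(V in FLAT) with V_1..V_m i.i.d. uniform k-flats of F_2^n. *)
Definition P_FLAT (n k m : nat) : R :=
  INR (num_flat_sat n k m) / INR (num_flat_tuples n k m).

Definition Delta_k (k : nat) : R := ln (1 / 2) / ln (1 - / 2 ^ k).

Definition m_of (Delta : R) (n : nat) : nat := Z.to_nat (Int_part (Delta * INR n)).

(* Let Z(V) be the number of points of F_2^n covered by none of V_1, ..., V_m and
   q = 1 - 2^-k the probability that a uniform k-flat misses a given point.  Then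
   E Z = 2^n q^m, and Markov's inequality gives P(Z > 0) <= 2^n q^m.  The affine
   group acts transitively on pairs of distinct points, so the probability b that
   a uniform k-flat misses two distinct points does not depend on the pair;
   averaging over all pairs shows b <= q^2.  Hence E Z^2 <= E Z + (E Z)^2, and the
   second moment method gives P(Z > 0) >= E Z / (1 + E Z).  Finally
   ln (2^n q^m) = n (Delta - Delta_k) ln q + O(1) with ln q < 0, so E Z tends to
   infinity below the threshold and to 0 above it. *)

From mathcomp Require all_boot all_order all_algebra zify.
From Stdlib Require Import Reals Lra Lia ZArith.

Module FlatCounting.
Import mathcomp.boot.all_boot mathcomp.order.all_order mathcomp.algebra.all_algebra.
Import mathcomp.zify.zify.
Set Implicit Arguments. Unset Strict Implicit. Unset Printing Implicit Defensive.
Import GRing.Theory.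
Local Open Scope ring_scope.

Lemma sum_indicator_card (T : finType) (A : {pred T}) :
  (\sum_x (x \in A : nat) = #|A|)%N.
Proof. by rewrite -sum1_card [RHS]big_mkcond; apply: eq_bigr => x _; case: (x \in A). Qed.

(* The support bound behind the second moment method, proved by summing the
   pointwise inequality [2ab <= [b > 0] a^2 + [a > 0] b^2]. *)
Lemma sqr_sum_le_support (I : finType) (A : {pred I}) (f : I -> nat) :
  ((\sum_(i in A) f i) ^ 2 <= (\sum_(i in A) (0 < f i : nat)) * \sum_(i in A) f i ^ 2)%N.
Proof.
have pointwise a b : (2 * (a * b) <= (0 < b) * a ^ 2 + (0 < a) * b ^ 2)%N.
  case: (posnP a) => [-> | a_gt0]; first by rewrite muln0.
  case: (posnP b) => [-> | b_gt0]; first by rewrite muln0 mul0n.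
  by rewrite !mul1n nat_Cauchy.
have double_sum : (\sum_(i in A) \sum_(j in A) ((0 < f j) * f i ^ 2 + (0 < f i) * f j ^ 2) =
    2 * ((\sum_(i in A) (0 < f i : nat)) * \sum_(i in A) f i ^ 2))%N.
  under eq_bigr => i _ do rewrite big_split /= -big_distrl -big_distrr /=.
  by rewrite big_split /= -big_distrl -big_distrr /= mulnC addnn mul2n.
rewrite -(leq_pmul2l (isT : 0 < 2)%N) -double_sum -mulnn big_distrl big_distrr /=.
apply: leq_sum => i _; rewrite !big_distrr /=; apply: leq_sum => j _; exact: pointwise.
Qed.

(* Read with [X = 2^n], [s] the number of satisfiable m-tuples, [nu = N^m] for
   the number [N] of k-flats, [al = a^m] and [be = b^m] for the numbers [a], [b]
   of k-flats missing one, resp. two given points, [ka = (2^k)^m] and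
   [ga = (2^k - 1)^m]: the hypotheses are the second moment inequality,
   [a / N = q] and [b / N <= q^2], and the conclusion is
   [s / nu >= E Z / (1 + E Z)]. *)
Lemma second_moment_rescaled X s al be nu ka ga :
  ((X * al) ^ 2 <= s * (X * (al + (X - 1) * be)))%N ->
  (al * ka = nu * ga)%N -> (be * ka ^ 2 <= nu * ga ^ 2)%N ->
  (X * ga * nu <= s * (ka + X * ga))%N.
Proof.
move=> second_moment diag offdiag.
have XK : (X * ga * nu = X * al * ka)%N by rewrite -!mulnA diag [(ga * nu)%N]mulnC.
have key : (X * ga * nu * (X * ga * nu) <= X * ga * nu * (s * (ka + X * ga)))%N.
  apply: (@leq_trans (s * (X * (al + (X - 1) * be)) * ka ^ 2)).
    by rewrite {1 2}XK mulnn expnMn leq_mul2r second_moment orbT.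
  have inner : (al * ka ^ 2 + (X - 1) * (be * ka ^ 2) <= nu * ga * ka + X * (nu * ga ^ 2))%N.
    by rewrite -mulnn mulnA diag leq_add2l leq_mul // leq_subr.
  have := leq_mul (leqnn (s * X)) inner; nia.
have [-> // | pos] := posnP (X * ga * nu).
by rewrite -(leq_pmul2l pos).
Qed.

Lemma card_F2vec n : #|{: F2vec n}| = (2 ^ n)%N.
Proof. by rewrite card_mx card_Fp // mul1n. Qed.

Section AffineSolutions.
Variables (n k : nat) (A : 'M['F_2]_(k, n)).
Hypothesis A_free : row_free A.

Definition sol_set (e : 'cV['F_2]_k) : {set F2vec n} := [set x | A *m x^T == e].

Lemma exists_sol e : exists x : F2vec n, A *m x^T = e.
Proof.
exists (e^T *m pinvmx A^T); apply: trmx_inj.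
rewrite trmx_mul trmxK mulmxKpV //; apply: submx_full.
by rewrite /row_full mxrank_tr.
Qed.

Lemma card_sol_set_eq e : #|sol_set e| = #|sol_set 0|.
Proof.
have [x0 Ax0] := exists_sol e.
have -> : sol_set e = [set x0 + y | y in sol_set 0].
  apply/setP=> y; rewrite !inE; apply/idP/imsetP => [/eqP Ay | [z]].
    exists (y - x0); last by rewrite addrC subrK.
    by rewrite inE linearB /= mulmxBr Ay Ax0 subrr.
  by rewrite inE => /eqP Az ->; rewrite linearD /= mulmxDr Az Ax0 addr0.
by rewrite card_imset //; exact: addrI.
Qed.

Lemma card_sol_set e : (#|sol_set e| * 2 ^ k)%N = (2 ^ n)%N.
Proof.
have -> : (2 ^ n = \sum_(e' : 'cV['F_2]_k) #|sol_set e'|)%N.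
  rewrite -card_F2vec -sum1_card (partition_big (fun x : F2vec n => A *m x^T) predT) //=.
  by apply: eq_bigr => e' _; rewrite -sum1_card; apply: eq_bigl => x; rewrite inE.
rewrite (eq_bigr _ (fun e' _ => card_sol_set_eq e')) sum_nat_const.
by rewrite card_mx card_Fp // muln1 card_sol_set_eq mulnC.
Qed.

End AffineSolutions.

Lemma flatsP n k (S : {set F2vec n}) :
  reflect (exists A : 'M['F_2]_(k, n), exists2 e, row_free A & S = sol_set A e)
          (S \in flats n k).
Proof.
rewrite inE; apply: (iffP existsP) => [[A /existsP[e /andP[A_free /eqP->]]] | [A [e A_free ->]]].
  by exists A, e.
by exists A; apply/existsP; exists e; rewrite A_free eqxx.
Qed.

Lemma flats_neq0 n k : (k <= n)%N -> flats n k != set0.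
Proof.
move=> le_kn; apply/set0Pn; exists (sol_set (pid_mx k : 'M['F_2]_(k, n)) 0).
by apply/flatsP; exists (pid_mx k), 0 => //; rewrite /row_free rank_pid_mx.
Qed.

Lemma card_flat n k (S : {set F2vec n}) :
  S \in flats n k -> (#|S| * 2 ^ k)%N = (2 ^ n)%N.
Proof. by case/flatsP=> A [e A_free ->]; exact: card_sol_set. Qed.

Lemma card_flatC n k (S : {set F2vec n}) :
  S \in flats n k -> (#|~: S| * 2 ^ k = 2 ^ n * (2 ^ k - 1))%N.
Proof.
move=> S_flat; have := card_flat S_flat; have := cardsC S; rewrite card_F2vec.
have : (0 < 2 ^ k)%N by rewrite expn_gt0.
nia.
Qed.

Definition aff n (M : 'M['F_2]_n) (b x : F2vec n) : F2vec n := x *m M + b.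

Section AffineMaps.
Variables (n : nat) (M : 'M['F_2]_n) (b : F2vec n).
Hypothesis M_unit : M \in unitmx.

Definition aff_inv := aff (invmx M) (- (b *m invmx M)).

Lemma affK : cancel (aff M b) aff_inv.
Proof. by move=> x; rewrite /aff_inv /aff mulmxDl mulmxK // addrK. Qed.

Lemma aff_invK : cancel aff_inv (aff M b).
Proof. by move=> y; rewrite /aff_inv /aff mulmxDl mulNmx !mulmxKV // subrK. Qed.

Lemma aff_inj : injective (aff M b).
Proof. exact: can_inj affK. Qed.

Lemma flats_aff k S : S \in flats n k -> aff M b @: S \in flats n k.
Proof.
case/flatsP=> A [e A_free ->]; apply/flatsP.
set A' := A *m (invmx M)^T.
exists A'; last exists (e + A' *m b^T).
  by rewrite /row_free mxrankMfree // row_free_unit unitmx_tr unitmx_inv.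
rewrite (can2_imset_pre _ affK aff_invK); apply/setP => y.
rewrite !inE /aff_inv /aff -mulmxBl trmx_mul mulmxA -/A' linearB /= mulmxBr.
by rewrite subr_eq.
Qed.

End AffineMaps.

Section PairAvoidance.
Variables n k : nat.

Definition num_flats_avoiding (x y : F2vec n) :=
  #|[set S in flats n k | (x \notin S) && (y \notin S)]|.

Local Notation n_point := (num_flats_avoiding 0 0).
Local Notation n_pair := (num_flats_avoiding 0 (pid_mx 1)).

Lemma num_flats_avoidingE x y :
  num_flats_avoiding x y = (\sum_(S in flats n k) (x \notin S) * (y \notin S))%N.
Proof.
rewrite /num_flats_avoiding -sum1_card big_mkcond [RHS]big_mkcond /=; apply: eq_bigr => S _.
by rewrite inE; case: (S \in _); case: (x \in S); case: (y \in S).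
Qed.

Lemma num_flats_avoiding_aff_le M b x y : M \in unitmx ->
  (num_flats_avoiding x y <= num_flats_avoiding (aff M b x) (aff M b y))%N.
Proof.
move=> M_unit; have aff_set_inj := imset_inj (aff_inj (b := b) M_unit).
rewrite /num_flats_avoiding -(card_imset _ aff_set_inj).
apply/subset_leq_card/subsetP => T /imsetP[S]; rewrite inE => /and3P[S_flat xS yS] ->.
by rewrite inE flats_aff // !mem_imset ?xS ?yS //; exact: aff_inj.
Qed.

Lemma num_flats_avoiding_aff M b x y : M \in unitmx ->
  num_flats_avoiding (aff M b x) (aff M b y) = num_flats_avoiding x y.
Proof.
move=> M_unit; apply/eqP; rewrite eqn_leq num_flats_avoiding_aff_le // andbT.
rewrite -{2}(affK b M_unit x) -{2}(affK b M_unit y).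
by apply: num_flats_avoiding_aff_le; rewrite unitmx_inv.
Qed.

Lemma num_flats_avoiding_diag x : num_flats_avoiding x x = num_flats_avoiding 0 0.
Proof. by rewrite -(num_flats_avoiding_aff x 0 0 (unitmx1 _ _)) /aff mulmx1 add0r. Qed.

(* Translate [x] to [0], then change basis to send [y - x] to the first basis
   vector. *)
Lemma num_flats_avoiding_offdiag x y :
  x != y -> num_flats_avoiding x y = num_flats_avoiding 0 (pid_mx 1).
Proof.
move=> neq_xy; have -> : num_flats_avoiding x y = num_flats_avoiding 0 (y - x).
  by rewrite -(num_flats_avoiding_aff x 0 (y - x) (unitmx1 _ _)) /aff !mulmx1 add0r subrK.
have nz_v : y - x != 0 by rewrite subr_eq0 eq_sym.
have := mulmx_ebase (y - x); rewrite rank_rV nz_v /=.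
rewrite [col_ebase _]mx11_scalar mul_scalar_mx -scalemxAl => v_ebase.
have c_unit : col_ebase (y - x) 0 0 \is a GRing.unit.
  by have := col_ebase_unit (y - x); rewrite unitmxE det_mx11.
set M := col_ebase (y - x) 0 0 *: row_ebase (y - x).
have M_unit : M \in unitmx by rewrite unitmxZ // row_ebase_unit.
rewrite -(num_flats_avoiding_aff 0 0 (pid_mx 1) M_unit) /aff mul0mx !addr0.
by rewrite /M -scalemxAr v_ebase.
Qed.

Lemma sum_num_flats_avoiding_diag :
  (\sum_(x : F2vec n) num_flats_avoiding x x = \sum_(S in flats n k) #|~: S|)%N.
Proof.
rewrite (eq_bigr _ (fun x _ => num_flats_avoidingE x x)).
rewrite exchange_big /=; apply: eq_bigr => S _; rewrite -sum_indicator_card.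
by apply: eq_bigr => x _; rewrite inE; case: (x \in S).
Qed.

Lemma sum_num_flats_avoiding : (\sum_(x : F2vec n) \sum_(y : F2vec n) num_flats_avoiding x y =
  \sum_(S in flats n k) #|~: S| ^ 2)%N.
Proof.
rewrite (eq_bigr _ (fun x _ => eq_bigr _ (fun y _ => num_flats_avoidingE x y))).
rewrite (eq_bigr _ (fun x _ => exchange_big _ _ _ _ _ _)) /=.
rewrite exchange_big /=; apply: eq_bigr => S _.
rewrite -mulnn -sum_indicator_card big_distrl /=; apply: eq_bigr => x _.
by rewrite big_distrr /=; apply: eq_bigr => y _; rewrite !inE.
Qed.

Lemma sum_num_flats_avoiding_diag_pow m :
  (\sum_(x : F2vec n) num_flats_avoiding x x ^ m = 2 ^ n * n_point ^ m)%N.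
Proof. by under eq_bigr do rewrite num_flats_avoiding_diag; rewrite sum_nat_const card_F2vec. Qed.

Lemma sum_num_flats_avoiding_pow m :
  (\sum_(x : F2vec n) \sum_(y : F2vec n) num_flats_avoiding x y ^ m =
  2 ^ n * (n_point ^ m + (2 ^ n - 1) * n_pair ^ m))%N.
Proof.
rewrite (eq_bigr (fun _ => n_point ^ m + (2 ^ n - 1) * n_pair ^ m)%N).
  by rewrite sum_nat_const card_F2vec.
move=> x _; rewrite (bigD1 x) //= num_flats_avoiding_diag; congr (_ + _)%N.
rewrite (eq_bigr (fun _ => n_pair ^ m)%N) => [|y]; last first.
  by rewrite eq_sym => /num_flats_avoiding_offdiag ->.
by rewrite sum_nat_const cardC1 card_F2vec subn1.
Qed.

Lemma num_flats_avoiding_point : (n_point * 2 ^ k = #|flats n k| * (2 ^ k - 1))%N.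
Proof.
have X_gt0 : (0 < 2 ^ n)%N by rewrite expn_gt0.
apply/eqP; rewrite -(eqn_pmul2l X_gt0) mulnA -[n_point]expn1 -sum_num_flats_avoiding_diag_pow.
under eq_bigr do rewrite expn1.
rewrite sum_num_flats_avoiding_diag big_distrl mulnCA -sum_nat_const /=.
by apply/eqP/eq_bigr => S /card_flatC.
Qed.

Lemma num_flats_avoiding_pair_le : (0 < n)%N ->
  (n_pair * (2 ^ k) ^ 2 <= #|flats n k| * (2 ^ k - 1) ^ 2)%N.
Proof.
move=> n_gt0; have X_gt1 : (1 < 2 ^ n)%N by rewrite -{1}(expn0 2) ltn_exp2l.
have K_gt0 : (0 < 2 ^ k)%N by rewrite expn_gt0.
have second_sum : (2 ^ n * (n_point + (2 ^ n - 1) * n_pair) * (2 ^ k) ^ 2 =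
    #|flats n k| * (2 ^ n * (2 ^ k - 1)) ^ 2)%N.
  rewrite -[n_point]expn1 -[n_pair]expn1 -sum_num_flats_avoiding_pow.
  rewrite (eq_bigr _ (fun x _ => eq_bigr _ (fun y _ => expn1 (num_flats_avoiding x y)))).
  rewrite sum_num_flats_avoiding big_distrl -sum_nat_const /=.
  by apply: eq_bigr => S /card_flatC; rewrite -expnMn => ->.
have := num_flats_avoiding_point; move: second_sum.
move: (2 ^ n)%N (2 ^ k)%N X_gt1 K_gt0 => X K X_gt1 K_gt0.
move: (n_point) (n_pair) #|flats n k| => a b N.
case: X X_gt1 => // -[//|X'] _; case: K K_gt0 => // K' _.
rewrite !subn1 /= => E2 E1.
have {}E2 : ((a + X'.+1 * b) * K'.+1 ^ 2 = N * X'.+2 * K' ^ 2)%N.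
  apply/eqP; rewrite -(eqn_pmul2l (isT : 0 < X'.+2)%N) mulnA E2; apply/eqP; nia.
rewrite -(leq_pmul2l (isT : 0 < X'.+1)%N); nia.
Qed.

End PairAvoidance.

Arguments num_flats_avoiding : clear implicits.

Section FlatTuples.
Variables n k m : nat.
Local Notation tuple := {ffun 'I_m -> {set F2vec n}}.
Local Notation n_point := (num_flats_avoiding n k 0 0).
Local Notation n_pair := (num_flats_avoiding n k 0 (pid_mx 1)).

Definition flat_tuples := [set V : tuple | [forall j, V j \in flats n k]].
Definition uncovered (V : tuple) := ~: \bigcup_(j < m) V j.

Lemma card_tuples_on (B : {set {set F2vec n}}) :
  #|[set V : tuple | [forall j, V j \in B]]| = (#|B| ^ m)%N.
Proof.
rewrite -[in RHS](card_ord m) -card_ffun_on; apply: eq_card => V.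
by rewrite inE; apply/forallP/ffun_onP.
Qed.

Lemma in_uncovered V x : (x \in uncovered V) = [forall j, x \notin V j].
Proof.
rewrite in_setC; apply/idP/forallP => [/bigcupP no_cover j | uncov].
  by apply/negP => xVj; apply: no_cover; exists j.
by apply/bigcupP => -[j _]; apply/negP.
Qed.

Lemma sum_uncovered_pair x y : (\sum_(V in flat_tuples)
  (x \in uncovered V) * (y \in uncovered V) = num_flats_avoiding n k x y ^ m)%N.
Proof.
rewrite -card_tuples_on -sum_indicator_card [RHS]big_mkcond [LHS]big_mkcond /=.
apply: eq_bigr => V _; rewrite !in_uncovered !inE.
have -> : [forall j, V j \in [set S in flats n k | (x \notin S) && (y \notin S)]] =
    [&& [forall j, V j \in flats n k], [forall j, x \notin V j] & [forall j, y \notin V j]].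
  apply/forallP/and3P => [all_in | [/forallP in_flats /forallP x_out /forallP y_out] j].
    by split; apply/forallP => j; have := all_in j; rewrite inE => /and3P[].
  by rewrite inE in_flats x_out y_out.
by case: [forall j, _ \in _]; case: [forall j, x \notin _]; case: [forall j, y \notin _].
Qed.

Lemma sum_card_uncovered :
  (\sum_(V in flat_tuples) #|uncovered V| = 2 ^ n * n_point ^ m)%N.
Proof.
rewrite -(sum_num_flats_avoiding_diag_pow n k m).
rewrite (eq_bigr _ (fun x _ => esym (sum_uncovered_pair x x))) exchange_big /=.
apply: eq_bigr => V _; rewrite -sum_indicator_card; apply: eq_bigr => x _.
by case: (x \in _).
Qed.

Lemma sum_card_uncovered_sq : (\sum_(V in flat_tuples) #|uncovered V| ^ 2 =
  2 ^ n * (n_point ^ m + (2 ^ n - 1) * n_pair ^ m))%N.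
Proof.
rewrite -(sum_num_flats_avoiding_pow n k m).
rewrite (eq_bigr _ (fun x _ => eq_bigr _ (fun y _ => esym (sum_uncovered_pair x y)))).
rewrite (eq_bigr _ (fun x _ => exchange_big _ _ _ _ _ _)) exchange_big /=.
apply: eq_bigr => V _; rewrite -mulnn -sum_indicator_card big_distrl /=.
by apply: eq_bigr => x _; rewrite big_distrr.
Qed.

Lemma num_flat_satE :
  num_flat_sat n k m = (\sum_(V in flat_tuples) (0 < #|uncovered V| : nat))%N.
Proof.
rewrite /num_flat_sat -sum_indicator_card [RHS]big_mkcond /=; apply: eq_bigr => V _.
rewrite !inE /flat_sat card_gt0 /uncovered -[X in ~: _ != X]setCT (inj_eq (@setC_inj _)).
by case: [forall j, _].
Qed.

Lemma num_flat_tuples_gt0 : (k <= n)%N -> (0 < num_flat_tuples n k m)%N.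
Proof. by move=> le_kn; rewrite expn_gt0 card_gt0 flats_neq0. Qed.

Lemma num_flat_sat_le_tuples : (num_flat_sat n k m <= num_flat_tuples n k m)%N.
Proof.
rewrite /num_flat_tuples -card_tuples_on; apply/subset_leq_card/subsetP => V.
by rewrite !inE => /andP[].
Qed.

Lemma num_flat_sat_le_first_moment :
  (num_flat_sat n k m * (2 ^ k) ^ m <= 2 ^ n * (2 ^ k - 1) ^ m * num_flat_tuples n k m)%N.
Proof.
have markov : (num_flat_sat n k m <= 2 ^ n * n_point ^ m)%N.
  by rewrite num_flat_satE -sum_card_uncovered; apply: leq_sum => V _; case: #|_|.
rewrite /num_flat_tuples; have -> : (2 ^ n * (2 ^ k - 1) ^ m * #|flats n k| ^ m =
    2 ^ n * n_point ^ m * (2 ^ k) ^ m)%N.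
  by rewrite -!mulnA -!expnMn num_flats_avoiding_point [((2 ^ k - 1) * _)%N]mulnC.
by rewrite leq_mul2r markov orbT.
Qed.

Lemma num_flat_sat_ge_second_moment : (0 < n)%N ->
  (2 ^ n * (2 ^ k - 1) ^ m * num_flat_tuples n k m <=
     num_flat_sat n k m * ((2 ^ k) ^ m + 2 ^ n * (2 ^ k - 1) ^ m))%N.
Proof.
move=> n_gt0.
have second_moment := sqr_sum_le_support [pred V in flat_tuples] (fun V => #|uncovered V|).
rewrite -num_flat_satE sum_card_uncovered sum_card_uncovered_sq in second_moment.
have diag : (n_point ^ m * (2 ^ k) ^ m = #|flats n k| ^ m * (2 ^ k - 1) ^ m)%N.
  by rewrite -!expnMn num_flats_avoiding_point.
have offdiag : (n_pair ^ m * ((2 ^ k) ^ m) ^ 2 <=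
    #|flats n k| ^ m * ((2 ^ k - 1) ^ m) ^ 2)%N.
  rewrite -!expnM mulnC [(m * 2)%N]mulnC !expnM -!expnMn.
  case: m => [|m']; first by [].
  by rewrite leq_exp2r // mulnC num_flats_avoiding_pair_le.
by rewrite /num_flat_tuples; apply: second_moment_rescaled second_moment diag offdiag.
Qed.

End FlatTuples.

End FlatCounting.

Import mathcomp.boot.ssreflect mathcomp.boot.ssrbool.
Open Scope R_scope.

Lemma INR_expn a b : INR (ssrnat.expn a b) = INR a ^ b.
Proof. by elim: b => [|b IHb] //=; rewrite ssrnat.expnS mult_INR IHb. Qed.

Lemma INR_2 : INR 2 = 2.
Proof. by rewrite /=; lra. Qed.

Lemma INR_pow2_sub1 n : INR (ssrnat.subn (ssrnat.expn 2 n) 1) = 2 ^ n - 1.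
Proof. by rewrite minus_INR ?INR_expn ?INR_2 //; apply/ssrnat.leP; rewrite ssrnat.expn_gt0. Qed.

Lemma INR_leq {a b : nat} : ssrnat.leq a b -> INR a <= INR b.
Proof. by move/ssrnat.leP; exact: le_INR. Qed.

Lemma pow2_ge1 k : 1 <= 2 ^ k.
Proof. apply: pow_R1_Rle; lra. Qed.

Lemma Rdiv_le_cross a b c d : 0 < b -> 0 < d -> a * d <= c * b -> a / b <= c / d.
Proof.
move=> b_gt0 d_gt0 cross.
have -> : a / b = a * d * / (b * d) by field; lra.
have -> : c / d = c * b * / (b * d) by field; lra.
by apply: Rmult_le_compat_r => //; left; apply: Rinv_0_lt_compat; nra.
Qed.

(* [first_moment n k m] is E Z for m independent uniform k-flats of F_2^n. *)
Definition avoid_prob (k : nat) : R := 1 - / 2 ^ k.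
Definition first_moment (n k m : nat) : R := 2 ^ n * avoid_prob k ^ m.

Lemma first_moment_ratio n k m :
  first_moment n k m = 2 ^ n * (2 ^ k - 1) ^ m / (2 ^ k) ^ m.
Proof.
have K1 := pow2_ge1 k.
rewrite /first_moment; have -> : avoid_prob k = (2 ^ k - 1) * / 2 ^ k.
  by rewrite /avoid_prob; field; lra.
by rewrite Rpow_mult_distr pow_inv /Rdiv Rmult_assoc.
Qed.

Section FlatProbability.
Variables n k m : nat.
Hypothesis le_kn : (k <= n)%nat.

Lemma num_flat_tuples_INR_gt0 : 0 < INR (num_flat_tuples n k m).
Proof.
apply: lt_0_INR; apply/ssrnat.ltP; apply: FlatCounting.num_flat_tuples_gt0.
exact/ssrnat.leP.
Qed.

Lemma P_FLAT_ge0 : 0 <= P_FLAT n k m.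
Proof.
apply: Rmult_le_pos; first exact: pos_INR.
exact/Rlt_le/Rinv_0_lt_compat/num_flat_tuples_INR_gt0.
Qed.

Lemma P_FLAT_le1 : P_FLAT n k m <= 1.
Proof.
have := INR_leq (FlatCounting.num_flat_sat_le_tuples n k m) => s_le_T.
rewrite -(Rdiv_1_r 1); apply: Rdiv_le_cross; [exact: num_flat_tuples_INR_gt0 | lra | lra].
Qed.

Lemma P_FLAT_le_first_moment : P_FLAT n k m <= first_moment n k m.
Proof.
have := INR_leq (FlatCounting.num_flat_sat_le_first_moment n k m).
move: num_flat_tuples_INR_gt0; rewrite /P_FLAT first_moment_ratio.
rewrite !mult_INR !INR_expn INR_pow2_sub1 INR_2 => T_gt0 bound.
by apply: Rdiv_le_cross => //; apply/pow_lt/Rlt_le_trans/pow2_ge1; lra.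
Qed.

Hypothesis k_ge1 : (1 <= k)%nat.

Lemma P_FLAT_ge_second_moment :
  first_moment n k m / (1 + first_moment n k m) <= P_FLAT n k m.
Proof.
have n_gt0 : ssrnat.leq 1 n by apply/ssrnat.leP; lia.
have := INR_leq (@FlatCounting.num_flat_sat_ge_second_moment n k m n_gt0).
move: num_flat_tuples_INR_gt0; rewrite /P_FLAT first_moment_ratio.
rewrite !mult_INR plus_INR !mult_INR !INR_expn INR_pow2_sub1 INR_2 => T_gt0 bound.
have K_gt0 : 0 < (2 ^ k) ^ m by apply/pow_lt/Rlt_le_trans/pow2_ge1; lra.
have G_ge0 : 0 <= 2 ^ n * (2 ^ k - 1) ^ m.
  by apply: Rmult_le_pos; apply: pow_le; have := pow2_ge1 k; lra.
have -> : 2 ^ n * (2 ^ k - 1) ^ m / (2 ^ k) ^ m / (1 + 2 ^ n * (2 ^ k - 1) ^ m / (2 ^ k) ^ m)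
    = 2 ^ n * (2 ^ k - 1) ^ m / ((2 ^ k) ^ m + 2 ^ n * (2 ^ k - 1) ^ m).
  by field; lra.
by apply: Rdiv_le_cross => //; lra.
Qed.

End FlatProbability.

Lemma avoid_prob_bounds k : (1 <= k)%nat -> / 2 <= avoid_prob k < 1.
Proof.
move=> k_ge1; have K_ge2 : 2 <= 2 ^ k.
  by have := Rle_pow 2 1 k; rewrite pow_1; apply; [lra | lia].
have : / 2 ^ k <= / 2 by apply: Rinv_le_contravar; lra.
have : 0 < / 2 ^ k by apply: Rinv_0_lt_compat; lra.
rewrite /avoid_prob; lra.
Qed.

Lemma first_moment_gt0 n k m : (1 <= k)%nat -> 0 < first_moment n k m.
Proof.
move=> /avoid_prob_bounds q_bounds; rewrite /first_moment.
by apply: Rmult_lt_0_compat; apply: pow_lt; lra.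
Qed.

Lemma Rabs_P_FLAT_sub1_le n k m : (1 <= k)%nat -> (k <= n)%nat ->
  Rabs (P_FLAT n k m - 1) <= / first_moment n k m.
Proof.
move=> k_ge1 le_kn; have e_gt0 := first_moment_gt0 n k m k_ge1.
have lower := P_FLAT_ge_second_moment n k m le_kn k_ge1.
rewrite Rabs_left1; last by have := P_FLAT_le1 n k m le_kn; lra.
have -> : / first_moment n k m = 1 - first_moment n k m / (1 + first_moment n k m)
    + (/ first_moment n k m - / (1 + first_moment n k m)).
  by field; lra.
have : / (1 + first_moment n k m) <= / first_moment n k m.
  by apply: Rinv_le_contravar; lra.
lra.
Qed.

Lemma Rabs_P_FLAT_le n k m : (k <= n)%nat -> Rabs (P_FLAT n k m) <= first_moment n k m.
Proof.
move=> le_kn; rewrite Rabs_right; last exact/Rle_ge/(P_FLAT_ge0 n k m le_kn).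
exact: (P_FLAT_le_first_moment n k m le_kn).
Qed.

Lemma Un_cv_geometric_bound (u : nat -> R) (l C r : R) (N : nat) :
  0 < C -> 0 <= r < 1 ->
  (forall n, (N <= n)%nat -> Rabs (u n - l) <= C * r ^ n) -> Un_cv u l.
Proof.
move=> C_gt0 r_bounds bound eps eps_gt0.
have r_abs : Rabs r < 1 by rewrite Rabs_right; lra.
have [N0 small] := pow_lt_1_zero r r_abs (eps / C) (Rdiv_lt_0_compat _ _ eps_gt0 C_gt0).
exists (Nat.max N N0) => n n_ge; rewrite /R_dist.
apply: (Rle_lt_trans _ _ _ (bound n ltac:(lia))).
have rn_ge0 : 0 <= r ^ n by apply: pow_le; lra.
have := small n ltac:(lia); rewrite Rabs_right; last lra.
move=> rn_small; have -> : eps = C * (eps / C) by field; lra.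
exact: Rmult_lt_compat_l.
Qed.

Lemma m_of_bounds Delta n : 0 < Delta ->
  INR (m_of Delta n) <= Delta * INR n < INR (m_of Delta n) + 1.
Proof.
move=> Delta_gt0; have x_ge0 : 0 <= Delta * INR n by apply: Rmult_le_pos; [lra | apply: pos_INR].
have [ip_le ip_gt] := base_Int_part (Delta * INR n).
have ip_ge0 : (0 <= Int_part (Delta * INR n))%Z.
  have : (-1 < Int_part (Delta * INR n))%Z by apply: lt_IZR; lra.
  lia.
by rewrite /m_of INR_IZR_INZ Z2Nat.id //; lra.
Qed.

Definition moment_rate (k : nat) (Delta : R) : R := ln 2 + Delta * ln (avoid_prob k).

Lemma ln_avoid_prob_lt0 k : (1 <= k)%nat -> ln (avoid_prob k) < 0.
Proof. by move=> /avoid_prob_bounds q_bounds; rewrite -ln_1; apply: ln_increasing; lra. Qed.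

Lemma moment_rateE k Delta : (1 <= k)%nat ->
  moment_rate k Delta = (Delta - Delta_k k) * ln (avoid_prob k).
Proof.
move=> /ln_avoid_prob_lt0 lnq_lt0.
rewrite /moment_rate /Delta_k /avoid_prob /Rdiv Rmult_1_l ln_Rinv; [field | lra].
by rewrite /avoid_prob in lnq_lt0; lra.
Qed.

Lemma exp_le x y : x <= y -> exp x <= exp y.
Proof. by case=> [/exp_increasing/Rlt_le | ->] //; exact: Rle_refl. Qed.

Lemma exp_mul_INR n x : exp (INR n * x) = exp x ^ n.
Proof. by rewrite -{1}(ln_exp x) -ln_pow ?exp_ln //; [apply: pow_lt |]; apply: exp_pos. Qed.

Lemma first_moment_m_of_bounds k Delta n : (1 <= k)%nat -> 0 < Delta ->
  exp (moment_rate k Delta) ^ n <= first_moment n k (m_of Delta n) <=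
  exp (moment_rate k Delta) ^ n / avoid_prob k.
Proof.
move=> k_ge1 Delta_gt0; have [q_ge q_lt1] := avoid_prob_bounds k k_ge1.
have lnq_lt0 := ln_avoid_prob_lt0 k k_ge1.
have [m_le m_gt] := m_of_bounds Delta n Delta_gt0.
have -> : first_moment n k (m_of Delta n) =
    exp (INR n * ln 2 + INR (m_of Delta n) * ln (avoid_prob k)).
  by rewrite exp_plus !exp_mul_INR !exp_ln //; lra.
rewrite /Rdiv; have -> : / avoid_prob k = exp (- ln (avoid_prob k)).
  by rewrite exp_Ropp exp_ln //; lra.
rewrite -exp_mul_INR -exp_plus /moment_rate; split; apply: exp_le; nra.
Qed.

Theorem mainTheorem3 (k : nat) (Delta : R) :
  (1 <= k)%nat -> 0 < Delta ->
  (Delta < Delta_k k ->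
     Un_cv (fun n => P_FLAT n k (m_of Delta n)) 1) /\
  (Delta > Delta_k k ->
     Un_cv (fun n => P_FLAT n k (m_of Delta n)) 0).
Proof.
move=> k_ge1 Delta_gt0.
have lnq_lt0 := ln_avoid_prob_lt0 k k_ge1.
have [q_ge q_lt1] := avoid_prob_bounds k k_ge1.
have e_bounds n := first_moment_m_of_bounds k Delta n k_ge1 Delta_gt0.
have rate := moment_rateE k Delta k_ge1.
set L := moment_rate k Delta in rate e_bounds.
have expL_gt0 := exp_pos L.
split=> [Delta_lt | Delta_gt].
- have expL_gt1 : 1 < exp L by rewrite -exp_0; apply: exp_increasing; nra.
  apply: (Un_cv_geometric_bound _ 1 1 (/ exp L) k).
  + lra.
  + split; first exact/Rlt_le/Rinv_0_lt_compat.
    by rewrite -Rinv_1; apply: Rinv_lt_contravar; lra.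
  + move=> n le_kn; apply: (Rle_trans _ _ _ (Rabs_P_FLAT_sub1_le n k _ k_ge1 le_kn)).
    rewrite Rmult_1_l pow_inv; apply: Rinv_le_contravar; last exact: (proj1 (e_bounds n)).
    exact: pow_lt.
- have expL_lt1 : exp L < 1 by rewrite -exp_0; apply: exp_increasing; nra.
  apply: (Un_cv_geometric_bound _ 0 (/ avoid_prob k) (exp L) k).
  + by apply: Rinv_0_lt_compat; lra.
  + lra.
  + move=> n le_kn; rewrite Rminus_0_r.
    apply: (Rle_trans _ _ _ (Rabs_P_FLAT_le n k _ le_kn)).
    by rewrite Rmult_comm; exact: (proj2 (e_bounds n)).
Qed.
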